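(* Let $K\ge 2$, let $\mathcal{D}$ be a probability distribution on $\mathcal{X}\times\mathcal{Y}$ with $\mathcal{Y}=\{1,\dots,K\}$, and let $\rho$ be a probability distribution over classifiers $h:\mathcal{X}\to\mathcal{Y}$. Let $W_\rho(X,Y)=\mathbb{E}_{h\sim\rho}[\mathbb{1}(h(X)\neq Y)]$ for $(X,Y)\sim\mathcal{D}$. Suppose $\rho$ is competent, i.e. for every $0\le t\le 1/2$, $$\mathbb{P}_{\mathcal{D}}\big(W_\rho\in[t,1/2)\big)\;\ge\;\mathbb{P}_{\mathcal{D}}\big(W_\rho\in[1/2,1-t]\big).$$ Then $$L(h_{\mathrm{MV}})\le\min\left\{\frac{4(K-1)}{K}\Big(\mathbb{E}_{h\sim\rho}[L(h)]-\tfrac12\mathbb{E}_{h,h'\sim\rho}[D(h,h')]\Big),\;\mathbb{E}_{h\sim\rho}[L(h)]\right\}$$ and $$L(h_{\mathrm{MV}})\ge \mathbb{E}_{h\sim\rho}[L(h)]-\mathbb{E}_{h,h'\sim\rho}[D(h,h')].$$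
   Context: The error rate of a classifier is $L(h)=\mathbb{E}_{(X,Y)\sim\mathcal{D}}[\mathbb{1}(h(X)\neq Y)]$. The majority vote classifier is $h_{\mathrm{MV}}(x)=\arg\max_j \mathbb{E}_{h\sim\rho}[\mathbb{1}(h(x)=j)]$ (ties broken arbitrarily). The disagreement rate is $D(h,h')=\mathbb{E}_{X\sim\mathcal{D}}[\mathbb{1}(h(X)\neq h'(X))]$, and in $\mathbb{E}_{h,h'\sim\rho}[D(h,h')]$ the classifiers $h,h'$ are drawn independently from $\rho$. *)

From HB Require Import structures.
From mathcomp Require Import all_boot all_order all_algebra.
From mathcomp Require Import all_classical all_reals all_analysis.
Set Implicit Arguments. Unset Strict Implicit. Unset Printing Implicit Defensive.
Import Order.TTheory GRing.Theory Num.Theory.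
Local Open Scope classical_set_scope.
Local Open Scope ring_scope.

(* Label set Y = {1,...,K}, encoded as the ordinal type with K.-1.+1
   elements (= K elements under the standing hypothesis 2 <= K); the
   form n.+1 makes it a pointed type, required by measurableType. *)
Definition label (K : nat) : Type := 'I_K.-1.+1.
HB.instance Definition _ K := Choice.on (label K).
HB.instance Definition _ K := isPointed.Build (label K) ord0.
HB.instance Definition _ K := @isMeasurable.Build default_measure_display
  (label K) discrete_measurable discrete_measurable0
  discrete_measurableC discrete_measurableU.

Local Open Scope ereal_scope.

Section defs.
Context (R : realType) (d1 d2 : measure_display)
  (X : measurableType d1) (H : measurableType d2) (K : nat)
  (ev : H -> X -> label K)
  (D : probability (X * label K)%type R) (rho : probability H R).

Definition err (f : X -> label K) : \bar R :=
  \int[D]_z ((f z.1 != z.2)%:R)%:E.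

Definition Wrho (z : X * label K) : \bar R :=
  \int[rho]_h ((ev h z.1 != z.2)%:R)%:E.

Definition disagreement (h h' : H) : \bar R :=
  \int[D]_z ((ev h z.1 != ev h' z.1)%:R)%:E.

Definition gibbs_loss : \bar R := \int[rho]_h err (ev h).

Definition expected_disagreement : \bar R :=
  \int[rho]_h \int[rho]_h' disagreement h h'.

Definition is_majority_vote (f : X -> label K) : Prop :=
  forall x (j : label K),
    \int[rho]_h ((ev h x == j)%:R)%:E <= \int[rho]_h ((ev h x == f x)%:R)%:E.

Definition competent : Prop :=
  forall t : R, (0 <= t <= 2^-1)%R ->
    D [set z | (2^-1)%:E <= Wrho z <= (1 - t)%:E]
      <= D [set z | t%:E <= Wrho z < (2^-1)%:E].
End defs.

(* Let p_j(x) be the rho-weight of the classifiers voting j at x, and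
   W(x, y) = 1 - p_y(x).  Pointwise, the majority vote can only err where
   W >= 1/2, W <= (1 - sum_j p_j(x)^2) + 1(h_MV(x) <> y), and Cauchy-Schwarz
   over the K - 1 wrong labels gives
   K W^2 + (K - 1) (1 - sum_j p_j(x)^2) <= 2 (K - 1) W.
   By Fubini, E_D[W] is the Gibbs loss and E_D[1 - sum_j p_j^2] the expected
   disagreement; this yields the lower bound and reduces the upper bounds to
   P(W >= 1/2) <= E[W] and P(W >= 1/2) <= 2 E[W^2].
   These are where competence enters: integrating it over t in [a, 1/2],
   0 <= a < 1/2, gives E[F] <= E[G] whenever F + (W - a)^+ <= G on
   {W < 1/2} and F <= G + (1 - W - a)^+ on {W >= 1/2}; the two inequalities
   are the cases a = 0 and a = 1/4.  The integral over t is replaced by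
   Riemann sums with n steps, at a cost (1/2 - a)/n that vanishes as n
   grows. *)

From HB Require Import structures.
From mathcomp Require Import all_boot all_order all_algebra.
From mathcomp Require Import all_classical all_reals all_analysis.
From mathcomp Require Import measurable_realfun ring lra.
Set Implicit Arguments. Unset Strict Implicit. Unset Printing Implicit Defensive.
Import Order.TTheory GRing.Theory Num.Theory.
Local Open Scope classical_set_scope.
Local Open Scope ring_scope.

Lemma sum_mul_eq_natr {R : pzSemiRingType} {I : finType} (F : I -> R) (i : I) :
  \sum_j F j * (j == i)%:R = F i.
Proof.
rewrite (bigD1 i) //= eqxx mulr1 big1 ?addr0 // => j /negbTE ->.
by rewrite mulr0.
Qed.

(** * Probability vectors *)

Section probability_vector.
Context {R : realFieldType} {I : finType} (p : I -> R).
Hypotheses (p_ge0 : forall i, 0 <= p i) (p_sum1 : \sum_i p i = 1).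

Lemma prob_vector_le1 i : p i <= 1.
Proof.
by rewrite -p_sum1 (bigD1 i) //= lerDl sumr_ge0.
Qed.

Lemma sum_sqr_prob_vector_le1 : \sum_i p i ^+ 2 <= 1.
Proof.
rewrite -p_sum1; apply: ler_sum => i _.
by rewrite expr2 ler_piMr ?prob_vector_le1.
Qed.

Lemma prob_vectorD_le1 i j : i != j -> p i + p j <= 1.
Proof.
move=> ij; rewrite -p_sum1 (bigD1 i) //= lerD2l (bigD1 j) 1?eq_sym //=.
by rewrite lerDl sumr_ge0.
Qed.

Section argmax.
Variables (m : I) (p_max : forall j, p j <= p m).

Lemma half_le_loss_of_argmax_neq y : m != y -> 2^-1 <= 1 - p y.
Proof.
move=> my; have := prob_vectorD_le1 my; have := p_max y; lra.
Qed.

Lemma loss_le_disagreement_add_argmax_err y :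
  1 - p y <= (1 - \sum_i p i ^+ 2) + (m != y)%:R.
Proof.
have [<-|my] := eqVneq m y; last first.
  rewrite /= mulr1n; have := p_ge0 y; have := sum_sqr_prob_vector_le1; lra.
rewrite addr0 lerD2l lerN2 -[p m]mul1r -p_sum1 mulr_suml.
by apply: ler_sum => i _; rewrite expr2 ler_wpM2l.
Qed.

End argmax.

Lemma sqr_sum_le_card (A : {pred I}) (a : I -> R) :
  (\sum_(i in A) a i) ^+ 2 <= #|A|%:R * \sum_(i in A) a i ^+ 2.
Proof.
set s := \sum_(i in A) a i; set q := \sum_(i in A) a i ^+ 2.
have inner i : \sum_(j in A) (a i - a j) ^+ 2 = #|A|%:R * a i ^+ 2 + q - 2 * a i * s.
  under eq_bigr do rewrite sqrrB.
  rewrite big_split sumrB /= sumr_const sumrMnl -mulr_sumr -/s -/q.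
  by rewrite -(mulr_natl (a i ^+ 2)) -(mulr_natl (a i * s)); ring.
have : 0 <= \sum_(i in A) \sum_(j in A) (a i - a j) ^+ 2.
  by do 2![apply: sumr_ge0 => ? _]; exact: sqr_ge0.
under eq_bigr do rewrite inner.
rewrite sumrB big_split /= sumr_const -!mulr_sumr -mulr_suml -mulr_sumr -/s -/q.
rewrite -(mulr_natl q); nra.
Qed.

Lemma card_sqr_loss_add_disagreement_le y :
  #|I|%:R * (1 - p y) ^+ 2 + (#|I|%:R - 1) * (1 - \sum_i p i ^+ 2)
    <= 2 * (#|I|%:R - 1) * (1 - p y).
Proof.
have off_sum : \sum_(i | i != y) p i = 1 - p y.
  by rewrite -p_sum1 [in RHS](bigD1 y) //= addrAC subrr add0r.
have off_sqr : \sum_i p i ^+ 2 = p y ^+ 2 + \sum_(i | i != y) p i ^+ 2.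
  by rewrite (bigD1 y).
have off_card : #|predC1 y|%:R = #|I|%:R - 1 :> R.
  have I_gt0 : (0 < #|I|)%N by apply/card_gt0P; exists y.
  by rewrite cardC1 -subn1 natrB.
have := sqr_sum_le_card (predC1 y) p.
rewrite off_card off_sum off_sqr; have := prob_vector_le1 y; have := p_ge0 y.
nra.
Qed.

End probability_vector.

Lemma majority_vote_bound_arith {R : realFieldType} (k e b g s dd : R) :
    2 <= k -> e <= b -> b <= g -> 2^-1 * b <= s ->
    k * s + (k - 1) * dd <= 2 * (k - 1) * g -> g <= dd + e ->
  [/\ e <= 4 * (k - 1) / k * (g - 2^-1 * dd), e <= g & g - dd <= e].
Proof.
move=> k_ge2 e_le_b b_le_g b_le_s s_le g_le; split; [|lra|lra].
by rewrite mulrAC ler_pdivlMr; nra.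
Qed.

(** * Riemann sums of layer indicators *)

Section grid.
Context {R : realFieldType}.

Lemma staircase_full (d c : R) n : 0 < d -> n%:R * d <= c ->
  \sum_(k < n) (k.+1%:R * d <= c)%R%:R = n%:R :> R.
Proof.
move=> d_gt0 top; rewrite -[n in RHS]card_ord -sumr_const; apply: eq_bigr => k _.
suff -> : (k.+1%:R * d <= c)%R by [].
by apply: le_trans top; rewrite ler_pM2r // ler_nat.
Qed.

Lemma staircase_le (d c : R) n : 0 < d ->
  d * \sum_(k < n) (k.+1%:R * d <= c)%R%:R <= Num.max c 0.
Proof.
move=> d_gt0; elim: n => [|n IHn]; first by rewrite big_ord0 mulr0 le_max lexx orbT.
have [top|not_top] := boolP (n.+1%:R * d <= c).
  by rewrite staircase_full // le_max mulrC top.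
by rewrite big_ord_recr /= (negbTE not_top) addr0.
Qed.

Lemma staircase_ge (d c : R) n : 0 < d -> c - d <= n%:R * d ->
  c - d <= d * \sum_(k < n) (k.+1%:R * d <= c)%R%:R.
Proof.
move=> d_gt0; elim: n => [|n IHn]; first by rewrite big_ord0 mulr0 mul0r.
move=> c_le; have [top|not_top] := boolP (n.+1%:R * d <= c).
  by rewrite staircase_full // mulrC.
rewrite big_ord_recr /= (negbTE not_top) addr0; apply: IHn.
by move: not_top; rewrite -ltNge -natr1; lra.
Qed.

Variables (a : R) (n : nat).

Definition grid_step := (2^-1 - a) / n%:R.
Definition grid (k : nat) := a + k.+1%:R * grid_step.
Definition grid_sum (Q : R -> bool) := \sum_(k < n) grid_step * (Q (grid k))%:R.

Hypotheses (a_lt_half : a < 2^-1) (n_gt0 : (0 < n)%N).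

Lemma grid_step_gt0 : 0 < grid_step.
Proof. by rewrite divr_gt0 ?subr_gt0 ?ltr0n. Qed.

Lemma grid_length : n%:R * grid_step = 2^-1 - a.
Proof. by rewrite mulrC divfK // pnatr_eq0 -lt0n. Qed.

Lemma grid_le_half k : (k < n)%N -> grid k <= 2^-1.
Proof.
move=> lt_kn; have := grid_length; rewrite /grid.
have : k.+1%:R * grid_step <= n%:R * grid_step.
  by rewrite ler_pM2r ?grid_step_gt0 // ler_nat.
lra.
Qed.

Lemma grid_sum_ge0 Q : 0 <= grid_sum Q.
Proof. by apply: sumr_ge0 => k _; rewrite mulr_ge0 ?ler0n // ltW ?grid_step_gt0. Qed.

Lemma grid_sum_le Q : grid_sum Q <= 2^-1 - a.
Proof.
rewrite -grid_length -[n in n%:R * _]card_ord -sumr_const mulr_suml.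
apply: ler_sum => k _; rewrite mul1r ler_piMr ?(ltW grid_step_gt0) //.
by case: (Q _).
Qed.

Lemma grid_sum_below_le v :
  grid_sum (fun t => (t <= v) && (v < 2^-1)) <= Num.max (v - a) 0.
Proof.
have [v_ge|v_lt] := leP 2^-1 v.
  rewrite (_ : grid_sum _ = 0) ?le_max ?lexx ?orbT //.
  by apply: big1 => k _; rewrite andbF mulr0.
rewrite /grid_sum -mulr_sumr.
under eq_bigr => k _ do rewrite andbT /grid -lerBrDl.
exact: staircase_le grid_step_gt0.
Qed.

Lemma grid_sum_above_ge v : 2^-1 <= v ->
  Num.max (1 - v - a) 0 - grid_step
    <= grid_sum (fun t => (2^-1 <= v) && (v <= 1 - t)).
Proof.
move=> v_ge; have step_gt0 := grid_step_gt0.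
have [c_le0|c_gt0] := leP (1 - v - a) 0.
  by rewrite sub0r (le_trans _ (grid_sum_ge0 _)) // oppr_le0 ltW.
rewrite /grid_sum -mulr_sumr.
have flip x : (v <= 1 - (a + x)) = (x <= 1 - v - a) by apply/idP/idP => ?; lra.
under eq_bigr => k _ do rewrite v_ge /= /grid flip.
apply: staircase_ge => //; rewrite grid_length; lra.
Qed.

Lemma grid_sum_below_le_above v (x y : R) :
    (v < 2^-1 -> x + Num.max (v - a) 0 <= y) ->
    (2^-1 <= v -> x <= y + Num.max (1 - v - a) 0) ->
  x + grid_sum (fun t => (t <= v) && (v < 2^-1))
    <= y + grid_step + grid_sum (fun t => (2^-1 <= v) && (v <= 1 - t)).
Proof.
move=> below above; have step_gt0 := grid_step_gt0.
have upper_ge0 := grid_sum_ge0 (fun t => (2^-1 <= v) && (v <= 1 - t)).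
have [v_lt|v_ge] : v < 2^-1 \/ 2^-1 <= v by case: ltP; [left|right].
  have := grid_sum_below_le v; have := below v_lt; lra.
have -> : grid_sum (fun t => (t <= v) && (v < 2^-1)) = 0.
  by apply: big1 => k _; rewrite [_ < _]ltNge v_ge andbF mulr0.
have := grid_sum_above_ge v_ge; have := above v_ge; lra.
Qed.

End grid.

Lemma le_of_le_add_div_nat {R : archiRealFieldType} (x y c : R) :
  (forall n, (0 < n)%N -> x <= y + c / n%:R) -> x <= y.
Proof.
move=> le_xy; apply/ler_addgt0Pr => e e_gt0.
pose n := (Num.truncn (c / e)).+1.
apply: le_trans (le_xy n isT) _; rewrite lerD2l ler_pdivrMr ?ltr0n //.
by rewrite mulrC -ler_pdivrMr // ltW // truncnS_gt.
Qed.

(** * Competent random variables *)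

Section integrals.
Context {R : realType} {d : measure_display} {T : measurableType d}.

Lemma measurable_fun_natr (b : T -> bool) :
  measurable_fun setT b -> measurable_fun setT (fun t => (b t)%:R : R).
Proof. by move=> mb; exact: (measurableT_comp (f := fun b : bool => b%:R : R)). Qed.

Lemma measurable_set_bool (b : T -> bool) :
  measurable_fun setT b -> measurable [set t | b t].
Proof.
move=> mb; have := mb measurableT [set true] I; rewrite setTI.
by congr measurable; apply/seteqP; split => t.
Qed.

Lemma integral_natr (mu : {measure set T -> \bar R}) (b : T -> bool) :
  measurable [set t | b t] -> (\int[mu]_t ((b t)%:R)%:E = mu [set t | b t])%E.
Proof.
move=> mb; rewrite -[in RHS](setIT [set t | b t]) -integral_indic //.
apply: eq_integral => t _; rewrite indicE.
by have -> : (t \in [set t | b t]) = b t by apply/idP/idP; rewrite inE.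
Qed.

Variable P : probability T R.

Lemma bounded_integrable (f : T -> R) M :
  measurable_fun setT f -> (forall t, `|f t| <= M) -> P.-integrable setT (EFin \o f).
Proof.
move=> mf f_le; apply: measurable_bounded_integrable => //.
  by rewrite (le_lt_trans (probability_le1 P measurableT)) ?ltry.
exists M; split; first exact: num_real.
by move=> M' lt_MM' t _; exact: le_trans (f_le t) (ltW lt_MM').
Qed.

Lemma integral_cst_probability (c : R) : (\int[P]_t c%:E = c%:E)%E.
Proof.
by rewrite integral_cst // -[RHS]mule1; congr (_ * _)%E; exact: probability_setT.
Qed.

Lemma integrable_unit_valued (f : T -> R) :
  measurable_fun setT f -> (forall t, 0 <= f t <= 1) -> P.-integrable setT (EFin \o f).
Proof.
move=> mf f01; apply: (bounded_integrable (M := 1) mf) => t.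
by have /andP[f0 f1] := f01 t; rewrite ger0_norm.
Qed.

Lemma EFin_Rintegral (f : T -> R) :
  P.-integrable setT (EFin \o f) -> (\int[P]_t f t)%:E = (\int[P]_t (f t)%:E)%E.
Proof. by move=> fi; rewrite fineK // integrable_fin_num. Qed.

Lemma integrableD_EFin (f g : T -> R) :
  P.-integrable setT (EFin \o f) -> P.-integrable setT (EFin \o g) ->
  P.-integrable setT (EFin \o (fun t => f t + g t)).
Proof.
by move=> fi gi; apply: eq_integrable (integrableD _ fi gi) => // t _; rewrite /= EFinD.
Qed.

Lemma integrableZl_EFin (k : R) (f : T -> R) :
  P.-integrable setT (EFin \o f) -> P.-integrable setT (EFin \o (fun t => k * f t)).
Proof.
by move=> fi; apply: eq_integrable (integrableZl _ k fi) => // t _; rewrite /= EFinM.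
Qed.

End integrals.

Section competence.
Context {R : realType} {d : measure_display} {T : measurableType d}.
Variables (P : probability T R) (v : T -> R).

Definition competent_variable : Prop :=
  forall t : R, 0 <= t <= 2^-1 ->
    (P [set z | (2^-1 <= v z <= 1 - t)%R] <= P [set z | (t <= v z < 2^-1)%R])%E.

Hypotheses (mv : measurable_fun setT v) (v_competent : competent_variable).
Variable a : R.
Hypotheses (a_ge0 : 0 <= a) (a_lt_half : a < 2^-1).
Variables (F G : T -> R).
Hypotheses (iF : P.-integrable setT (EFin \o F)) (iG : P.-integrable setT (EFin \o G)).
Hypothesis F_le_below : forall z, v z < 2^-1 -> F z + Num.max (v z - a) 0 <= G z.
Hypothesis F_le_above : forall z, 2^-1 <= v z -> F z <= G z + Num.max (1 - v z - a) 0.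

Section grid_n.
Variable n : nat.
Hypothesis n_gt0 : (0 < n)%N.

Section grid_integral.
Variable Q : T -> R -> bool.
Hypothesis mQ : forall t, measurable_fun setT (Q ^~ t).

Lemma measurable_grid_sum : measurable_fun setT (fun z => grid_sum a n (Q z)).
Proof.
apply: measurable_sum => k; apply: measurable_funM => //.
exact/measurable_fun_natr/mQ.
Qed.

Lemma integrable_grid_sum : P.-integrable setT (EFin \o (fun z => grid_sum a n (Q z))).
Proof.
apply: (bounded_integrable P (M := 2^-1 - a) measurable_grid_sum) => z.
by rewrite ger0_norm ?grid_sum_ge0 ?grid_sum_le.
Qed.

Lemma integral_grid_sum :
  (\int[P]_z (grid_sum a n (Q z))%:E
    = \sum_(k < n) (grid_step a n)%:E * P [set z | Q z (grid a n k)])%E.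
Proof.
have step_ge0 := ltW (grid_step_gt0 a_lt_half n_gt0).
under eq_integral do rewrite /grid_sum -sumEFin.
rewrite ge0_integral_sum //.
- apply: eq_bigr => k _; under eq_integral do rewrite EFinM.
  rewrite ge0_integralZl_EFin //; last exact/measurable_EFinP/measurable_fun_natr/mQ.
  by rewrite (integral_natr _ (measurable_set_bool (mQ _))).
- move=> k; apply: measurableT_comp => //; apply: measurable_funM => //.
  exact/measurable_fun_natr/mQ.
- by move=> k z _; rewrite lee_fin mulr_ge0.
Qed.

End grid_integral.

Let measurable_below t : measurable_fun setT (fun z => t <= v z < 2^-1).
Proof. by apply: measurable_and; [exact: measurable_fun_ler|exact: measurable_fun_ltr]. Qed.

Let measurable_above t : measurable_fun setT (fun z => 2^-1 <= v z <= 1 - t).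
Proof. by apply: measurable_and; exact: measurable_fun_ler. Qed.

Lemma competent_grid_sum_le :
  \int[P]_z grid_sum a n (fun t => 2^-1 <= v z <= 1 - t)
    <= \int[P]_z grid_sum a n (fun t => t <= v z < 2^-1).
Proof.
rewrite /Rintegral fine_le //.
- exact/integrable_fin_num/integrable_grid_sum.
- exact/integrable_fin_num/integrable_grid_sum.
rewrite !integral_grid_sum //; apply: lee_sum => k _.
rewrite lee_wpmul2l ?lee_fin ?(ltW (grid_step_gt0 _ _)) // v_competent //.
rewrite grid_le_half // andbT /grid addr_ge0 // mulr_ge0 //.
exact/ltW/grid_step_gt0.
Qed.

Lemma competent_Rintegral_le_add_step :
  \int[P]_z F z <= \int[P]_z G z + grid_step a n.
Proof.
set lower := fun z => grid_sum a n (fun t => t <= v z < 2^-1).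
set upper := fun z => grid_sum a n (fun t => 2^-1 <= v z <= 1 - t).
have i_lower := integrable_grid_sum measurable_below.
have i_upper := integrable_grid_sum measurable_above.
have i_step : P.-integrable setT (EFin \o (fun=> grid_step a n)).
  exact: (bounded_integrable P (M := `|grid_step a n|)).
have pointwise z : F z + lower z <= (G z + grid_step a n) + upper z.
  exact: grid_sum_below_le_above (F_le_below (z := z)) (F_le_above (z := z)).
have := le_Rintegral measurableT (integrableD_EFin iF i_lower)
  (integrableD_EFin (integrableD_EFin iG i_step) i_upper) (fun z _ => pointwise z).
have P_setT : fine (P setT) = 1 by rewrite (_ : P setT = 1%E) //; exact: probability_setT.
rewrite !RintegralD ?integrableD_EFin // Rintegral_cst // P_setT mulr1.
have := competent_grid_sum_le; rewrite -/lower -/upper; lra.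
Qed.

End grid_n.

Lemma competent_Rintegral_le : \int[P]_z F z <= \int[P]_z G z.
Proof.
apply: (le_of_le_add_div_nat (c := 2^-1 - a)) => n n_gt0.
exact: competent_Rintegral_le_add_step.
Qed.

End competence.

(** * The rho-weighted vote *)

Lemma card_label K : (0 < K)%N -> #|{: label K}| = K.
Proof. by move=> K_gt0; rewrite card_ord prednK. Qed.

Section label_valued.
Context {R : realType} {d : measure_display} {T : measurableType d} {K : nat}.

Lemma measurable_fun_label (f : T -> label K) :
  (forall j, measurable [set t | f t = j]) -> measurable_fun setT f.
Proof.
move=> mf _ A _; rewrite setTI.
have -> : f @^-1` A = \bigcup_(j in A) [set t | f t = j].
  by apply/seteqP; split => [t At|t [j Aj /= ->]] //; exists (f t).
by apply: fin_bigcup_measurable => //; exact: finite_finset.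
Qed.

Lemma measurable_label_preimage (f : T -> label K) (A : set (label K)) :
  measurable_fun setT f -> measurable (f @^-1` A).
Proof. by move=> mf; rewrite -[X in measurable X]setTI; apply: mf. Qed.

Lemma measurable_fun_eq_label (f g : T -> label K) :
  measurable_fun setT f -> measurable_fun setT g ->
  measurable_fun setT (fun t => f t == g t).
Proof.
move=> mf mg; apply: (measurable_fun_bool true); rewrite setTI.
have -> : (fun t => f t == g t) @^-1` [set true]
    = \bigcup_(j in setT) (f @^-1` [set j] `&` g @^-1` [set j]).
  apply/seteqP; split => [t /eqP ftg|t [j _ [/= -> ->]]]; last by rewrite /= eqxx.
  by exists (f t) => //; split; rewrite /= ?ftg.
apply: fin_bigcup_measurable => [|j _]; first exact: finite_finset.
by apply: measurableI; rewrite -[X in measurable X]setTI; [exact: mf|exact: mg].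
Qed.

Lemma measurable_fun_apply_label (phi : T -> label K -> R) (l : T -> label K) :
  (forall j, measurable_fun setT (phi ^~ j)) -> measurable_fun setT l ->
  measurable_fun setT (fun t => phi t (l t)).
Proof.
move=> mphi ml.
rewrite (_ : (fun t => _) = fun t => \sum_j phi t j * (j == l t)%:R); last first.
  by apply/funext => t; rewrite sum_mul_eq_natr.
apply: measurable_sum => j; apply: measurable_funM => //.
exact/measurable_fun_natr/measurable_fun_eq_label.
Qed.

Lemma integral_label (mu : {measure set T -> \bar R}) (l : T -> label K)
    (phi : label K -> R) :
  measurable_fun setT l -> (forall j, 0 <= phi j) ->
  (\int[mu]_t (phi (l t))%:E = \sum_j (phi j)%:E * mu [set t | l t = j])%E.
Proof.
move=> ml phi_ge0.
have mleq j : measurable_fun setT (fun t => j == l t).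
  exact: measurable_fun_eq_label.
have phi_split t : phi (l t) = \sum_j phi j * (j == l t)%:R.
  by rewrite sum_mul_eq_natr.
under eq_integral do rewrite phi_split -sumEFin.
rewrite ge0_integral_sum //.
- apply: eq_bigr => j _; under eq_integral do rewrite EFinM.
  rewrite ge0_integralZl_EFin //; last exact/measurable_EFinP/measurable_fun_natr.
  rewrite (integral_natr _ (measurable_set_bool (mleq j))); congr (_ * mu _)%E.
  by apply/seteqP; split => t /=; [move/eqP ->|move=> ->].
- move=> j; apply: measurableT_comp => //; apply: measurable_funM => //.
  exact: measurable_fun_natr.
- by move=> j t _; rewrite lee_fin mulr_ge0.
Qed.

End label_valued.

Section vote.
Context {R : realType} {d1 d2 : measure_display}.
Context {X : measurableType d1} {H : measurableType d2} {K : nat}.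
Variables (ev : H -> X -> label K) (rho : probability H R).
Hypothesis ev_meas : forall j : label K, measurable [set p : H * X | ev p.1 p.2 = j].

Definition vote (x : X) (j : label K) : R := fine (rho [set h | ev h x = j]).

Lemma measurable_ev : measurable_fun setT (fun p : H * X => ev p.1 p.2).
Proof. exact: measurable_fun_label. Qed.

Lemma measurable_ev_at x : measurable_fun setT (ev ^~ x).
Proof. exact: measurableT_comp measurable_ev (measurable_fun_pair _ _). Qed.

Lemma measurable_ev_of h : measurable_fun setT (ev h).
Proof. exact: measurableT_comp measurable_ev (measurable_fun_pair _ _). Qed.

Lemma voteE x j : (vote x j)%:E = rho [set h | ev h x = j].
Proof.
by rewrite fineK // fin_num_measure //; exact: (measurable_label_preimage [set j] (measurable_ev_at x)).
Qed.

Lemma vote_ge0 x j : 0 <= vote x j.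
Proof. by rewrite -lee_fin voteE. Qed.

Lemma integral_vote x (phi : label K -> R) : (forall j, 0 <= phi j) ->
  (\int[rho]_h (phi (ev h x))%:E = (\sum_j vote x j * phi j)%:E)%E.
Proof.
move=> phi_ge0; rewrite integral_label //; last exact: measurable_ev_at.
by rewrite -sumEFin; apply: eq_bigr => j _; rewrite EFinM voteE muleC.
Qed.

Lemma sum_vote x : \sum_j vote x j = 1.
Proof.
apply: EFin_inj; rewrite -(integral_cst_probability rho 1).
transitivity (\sum_j vote x j * 1)%:E.
  by congr EFin; apply: eq_bigr => j _; rewrite mulr1.
by symmetry; exact: (integral_vote x (phi := fun=> 1)).
Qed.

Lemma vote_le1 x j : vote x j <= 1.
Proof. exact: prob_vector_le1 (vote_ge0 x) (sum_vote x) j. Qed.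

Lemma integral_vote_eq x j :
  (\int[rho]_h ((ev h x == j)%:R)%:E = (vote x j)%:E)%E.
Proof.
have := integral_vote x (phi := fun i => (i == j)%:R) (fun=> ler0n _ _) => /= ->.
by rewrite sum_mul_eq_natr.
Qed.

Lemma integral_vote_neq x j :
  (\int[rho]_h ((ev h x != j)%:R)%:E = (1 - vote x j)%:E)%E.
Proof.
have := integral_vote x (phi := fun i => (i != j)%:R) (fun=> ler0n _ _) => /= ->.
rewrite -[in RHS](sum_vote x) [in LHS](bigD1 j) //= [in RHS](bigD1 j) //=.
rewrite eqxx mulr0 add0r addrAC subrr add0r.
by congr EFin; apply: eq_bigr => i ->; rewrite mulr1.
Qed.

Lemma integral_vote_loss x :
  (\int[rho]_h (1 - vote x (ev h x))%:E = (1 - \sum_j vote x j ^+ 2)%:E)%E.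
Proof.
have phi_ge0 j : 0 <= 1 - vote x j by rewrite subr_ge0 vote_le1.
have := integral_vote x phi_ge0 => /= ->.
by under eq_bigr do rewrite mulrBr mulr1 -expr2; rewrite sumrB sum_vote.
Qed.

Lemma measurable_vote j : measurable_fun setT (vote ^~ j).
Proof.
apply/measurable_EFinP.
rewrite (_ : _ \o _ = rho \o ysection [set p : H * X | ev p.1 p.2 = j]).
  exact: measurable_fun_ysection.
apply/funext => x /=; rewrite voteE; congr (rho _).
by apply/seteqP; split => h; rewrite /ysection /= in_setE.
Qed.

Lemma vote_le_majority hMV : is_majority_vote ev rho hMV ->
  forall x j, vote x j <= vote x (hMV x).
Proof. by move=> hMV_vote x j; have := hMV_vote x j; rewrite !integral_vote_eq lee_fin. Qed.

End vote.

Section majority_vote.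
Context {R : realType} {d1 d2 : measure_display}.
Context {X : measurableType d1} {H : measurableType d2} {K : nat}.
Variables (ev : H -> X -> label K) (D : probability (X * label K)%type R).
Variable rho : probability H R.
Hypothesis ev_meas : forall j : label K, measurable [set p : H * X | ev p.1 p.2 = j].

Definition vote_loss (z : X * label K) := 1 - vote ev rho z.1 z.2.
Definition vote_disagreement (x : X) := 1 - \sum_j vote ev rho x j ^+ 2.

Lemma WrhoE z : Wrho ev rho z = (vote_loss z)%:E.
Proof. exact: integral_vote_neq. Qed.

Lemma measurable_vote_loss : measurable_fun setT vote_loss.
Proof.
apply: measurable_funB => //.
apply: (measurable_fun_apply_label (phi := fun z j => vote ev rho z.1 j)) => // j.
exact: measurableT_comp (measurable_vote rho ev_meas j) _.
Qed.

Lemma measurable_vote_disagreement : measurable_fun setT vote_disagreement.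
Proof.
apply: measurable_funB => //; apply: measurable_sum => j.
by apply: measurable_funX; exact: (measurable_vote rho ev_meas j).
Qed.

Let measurable_ev_fst : measurable_fun setT (fun p : H * (X * label K) => ev p.1 p.2.1).
Proof.
rewrite (_ : (fun p => _) = (fun q : H * X => ev q.1 q.2) \o (fun p => (p.1, p.2.1))) //.
apply: measurableT_comp (measurable_ev ev_meas) (measurable_fun_pair _ _) => //.
exact: measurableT_comp.
Qed.

Lemma vote_loss_ge0 z : 0 <= vote_loss z.
Proof. by rewrite subr_ge0 vote_le1. Qed.

Lemma vote_loss_le1 z : vote_loss z <= 1.
Proof. by rewrite lerBlDr lerDl vote_ge0. Qed.

Lemma integrable_vote_loss : D.-integrable setT (EFin \o vote_loss).
Proof.
apply: integrable_unit_valued measurable_vote_loss _ => z.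
by rewrite vote_loss_ge0 vote_loss_le1.
Qed.

Lemma integrable_sqr_vote_loss : D.-integrable setT (EFin \o (fun z => vote_loss z ^+ 2)).
Proof.
apply: integrable_unit_valued; first exact: measurable_funX measurable_vote_loss.
by move=> z; rewrite sqr_ge0 expr_le1 ?vote_loss_ge0 ?vote_loss_le1.
Qed.

Lemma integrable_vote_disagreement :
  D.-integrable setT (EFin \o (fun z => vote_disagreement z.1)).
Proof.
apply: integrable_unit_valued; first exact: measurableT_comp measurable_vote_disagreement _.
move=> z; rewrite /vote_disagreement subr_ge0 lerBlDr lerDl.
rewrite sumr_ge0 ?andbT => [|j _]; last exact: sqr_ge0.
by apply: sum_sqr_prob_vector_le1; [exact: vote_ge0|exact: sum_vote].
Qed.

Lemma gibbs_lossE : gibbs_loss ev D rho = (\int[D]_z vote_loss z)%:E.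
Proof.
rewrite EFin_Rintegral ?integrable_vote_loss //.
under [RHS]eq_integral do rewrite -WrhoE.
apply: (fubini_tonelli (fun p => ((ev p.1 p.2.1 != p.2.2)%:R)%:E)) => [|p].
  apply/measurable_EFinP/measurable_fun_natr/measurable_neg.
  exact: measurable_fun_eq_label measurable_ev_fst (measurableT_comp _ _).
by rewrite lee_fin.
Qed.

Lemma expected_disagreementE :
  expected_disagreement ev D rho = (\int[D]_z vote_disagreement z.1)%:E.
Proof.
rewrite EFin_Rintegral ?integrable_vote_disagreement //.
transitivity (\int[rho]_h \int[D]_z (1 - vote ev rho z.1 (ev h z.1))%:E)%E.
  apply: eq_integral => h _.
  transitivity (\int[D]_z \int[rho]_h' ((ev h z.1 != ev h' z.1)%:R)%:E)%E.
    apply: (fubini_tonelli (fun p => ((ev h p.2.1 != ev p.1 p.2.1)%:R)%:E)) => [|p].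
      apply/measurable_EFinP/measurable_fun_natr/measurable_neg.
      apply: measurable_fun_eq_label measurable_ev_fst.
      exact: measurableT_comp (measurable_ev_of ev_meas h) (measurableT_comp _ _).
    by rewrite lee_fin.
  apply: eq_integral => z _; under eq_integral do rewrite eq_sym.
  exact: integral_vote_neq.
transitivity (\int[D]_z \int[rho]_h (1 - vote ev rho z.1 (ev h z.1))%:E)%E.
  apply: (fubini_tonelli (fun p => (1 - vote ev rho p.2.1 (ev p.1 p.2.1))%:E)) => [|p].
    apply/measurable_EFinP/measurable_funB => //.
    apply: (measurable_fun_apply_label (phi := fun p j => vote ev rho p.2.1 j)) => // j.
    exact: measurableT_comp (measurable_vote rho ev_meas j) (measurableT_comp _ _).
  by rewrite lee_fin subr_ge0 vote_le1.
by apply: eq_integral => z _; rewrite integral_vote_loss.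
Qed.

Lemma competent_vote_loss : competent ev D rho -> competent_variable D vote_loss.
Proof.
move=> rho_competent t t_range; have := rho_competent t t_range.
have -> : [set z | ((2^-1)%:E <= Wrho ev rho z <= (1 - t)%:E)%E]
    = [set z | 2^-1 <= vote_loss z <= 1 - t].
  by apply/seteqP; split => z /=; rewrite WrhoE !lee_fin.
have -> // : [set z | (t%:E <= Wrho ev rho z < (2^-1)%:E)%E]
    = [set z | t <= vote_loss z < 2^-1].
by apply/seteqP; split => z /=; rewrite WrhoE lee_fin lte_fin.
Qed.

Lemma sqr_vote_loss_le (K_gt0 : (0 < K)%N) z :
  K%:R * vote_loss z ^+ 2 + (K%:R - 1) * vote_disagreement z.1
    <= 2 * (K%:R - 1) * vote_loss z.
Proof.
have card_labelR : #|{: label K}|%:R = K%:R :> R by rewrite card_label.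
rewrite -card_labelR; apply: card_sqr_loss_add_disagreement_le.
- exact: vote_ge0.
- exact: sum_vote.
Qed.

Lemma Rintegral_sqr_vote_loss_le (K_gt0 : (0 < K)%N) :
  K%:R * \int[D]_z vote_loss z ^+ 2 + (K%:R - 1) * \int[D]_z vote_disagreement z.1
    <= 2 * (K%:R - 1) * \int[D]_z vote_loss z.
Proof.
have [i_sqr i_dis] := (integrable_sqr_vote_loss, integrable_vote_disagreement).
have i_loss := integrable_vote_loss.
rewrite -!RintegralZl // -RintegralD; [|by []|exact: integrableZl_EFin..].
apply: le_Rintegral => //; last by move=> z _; exact: sqr_vote_loss_le.
- by apply: integrableD_EFin; exact: integrableZl_EFin.
- exact: integrableZl_EFin.
Qed.

Variable hMV : X -> label K.
Hypotheses (hMV_meas : measurable_fun setT hMV) (hMV_vote : is_majority_vote ev rho hMV).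

Definition majority_error (z : X * label K) : R := (hMV z.1 != z.2)%:R.

Lemma measurable_majority_error : measurable_fun setT majority_error.
Proof.
apply/measurable_fun_natr/measurable_neg/measurable_fun_eq_label => //.
exact: measurableT_comp.
Qed.

Lemma integrable_majority_error : D.-integrable setT (EFin \o majority_error).
Proof.
apply: integrable_unit_valued measurable_majority_error _ => z.
by rewrite /majority_error; case: (_ != _); rewrite ?lexx ?ler01.
Qed.

Lemma errE : err D hMV = (\int[D]_z majority_error z)%:E.
Proof. by rewrite EFin_Rintegral ?integrable_majority_error. Qed.

Let vote_le_hMV x := vote_le_majority ev_meas hMV_vote x.

Lemma majority_error_le z : majority_error z <= (2^-1 <= vote_loss z)%R%:R.
Proof.
rewrite /majority_error; have [_|hMV_neq] := eqVneq (hMV z.1) z.2; first exact: ler0n.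
suff -> : 2^-1 <= vote_loss z by [].
apply: half_le_loss_of_argmax_neq hMV_neq.
- exact: vote_ge0.
- exact: sum_vote.
- exact: vote_le_hMV.
Qed.

Lemma vote_loss_le z : vote_loss z <= vote_disagreement z.1 + majority_error z.
Proof.
rewrite /vote_loss /vote_disagreement /majority_error.
apply: loss_le_disagreement_add_argmax_err.
- exact: vote_ge0.
- exact: sum_vote.
- exact: vote_le_hMV.
Qed.

Lemma Rintegral_vote_loss_le :
  \int[D]_z vote_loss z
    <= \int[D]_z vote_disagreement z.1 + \int[D]_z majority_error z.
Proof.
have [i_dis i_err] := (integrable_vote_disagreement, integrable_majority_error).
rewrite -RintegralD //; apply: le_Rintegral => //.
- exact: integrable_vote_loss.
- exact: integrableD_EFin.
- by move=> z _; exact: vote_loss_le.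
Qed.

Section competent_rho.
Hypothesis rho_competent : competent ev D rho.

Let loss_ge_half z : R := (2^-1 <= vote_loss z)%R%:R.

Let loss_ge_half_lt z : vote_loss z < 2^-1 -> loss_ge_half z = 0.
Proof. by move=> lt_half; rewrite /loss_ge_half leNgt lt_half. Qed.

Let loss_ge_half_ge z : 2^-1 <= vote_loss z -> loss_ge_half z = 1.
Proof. by rewrite /loss_ge_half => ->. Qed.

Let integrable_loss_ge_half : D.-integrable setT (EFin \o loss_ge_half).
Proof.
apply: integrable_unit_valued.
  by apply/measurable_fun_natr/measurable_fun_ler => //; exact: measurable_vote_loss.
by move=> z; rewrite /loss_ge_half; case: (2^-1 <= vote_loss z)%R; rewrite ?lexx ?ler01.
Qed.

Lemma Rintegral_majority_error_le :
  \int[D]_z majority_error z <= \int[D]_z loss_ge_half z.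
Proof.
apply: le_Rintegral integrable_majority_error integrable_loss_ge_half _ => // z _.
exact: majority_error_le.
Qed.

Lemma Rintegral_loss_ge_half_le : \int[D]_z loss_ge_half z <= \int[D]_z vote_loss z.
Proof.
apply: (competent_Rintegral_le measurable_vote_loss (competent_vote_loss rho_competent)
  (lexx 0)) => // [|z lt_half|z ge_half].
- exact: integrable_vote_loss.
- by rewrite loss_ge_half_lt // add0r subr0 max_l ?vote_loss_ge0.
- by rewrite loss_ge_half_ge // subr0 max_l ?subr_ge0 ?vote_loss_le1 // addrC subrK.
Qed.

Lemma Rintegral_loss_ge_half_le_sqr :
  2^-1 * \int[D]_z loss_ge_half z <= \int[D]_z vote_loss z ^+ 2.
Proof.
(* With a = 1/4 both side conditions reduce to (W - 1/2)^2 >= 0. *)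
have v_ge0 := vote_loss_ge0.
rewrite -RintegralZl //; apply: (competent_Rintegral_le (a := 4^-1) measurable_vote_loss
  (competent_vote_loss rho_competent)) => // [|||z lt_half|z ge_half].
- lra.
- exact: integrableZl_EFin.
- exact: integrable_sqr_vote_loss.
- rewrite loss_ge_half_lt // mulr0 add0r.
  have := sqr_ge0 (vote_loss z - 2^-1); case: (leP (vote_loss z - 4^-1) 0) => ?; nra.
- rewrite loss_ge_half_ge // mulr1.
  have := sqr_ge0 (vote_loss z - 2^-1); case: (leP (1 - vote_loss z - 4^-1) 0) => ?; nra.
Qed.

End competent_rho.

End majority_vote.

Unset Implicit Arguments.
Local Open Scope ereal_scope.

Theorem theorem3 (R : realType) (d1 d2 : measure_display)
  (X : measurableType d1) (H : measurableType d2) (K : nat)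
  (hK : (2 <= K)%N)
  (ev : H -> X -> label K)
  (ev_meas : forall j : label K, measurable [set p : H * X | ev p.1 p.2 = j])
  (D : probability (X * label K)%type R) (rho : probability H R)
  (hMV : X -> label K) (hMV_meas : measurable_fun setT hMV)
  (hMV_vote : is_majority_vote ev rho hMV)
  (hcomp : competent ev D rho) :
  err D hMV <= Order.min
    (((4 * (K%:R - 1) / K%:R)%R)%:E *
       (gibbs_loss ev D rho - (2^-1)%:E * expected_disagreement ev D rho))
    (gibbs_loss ev D rho)
  /\ gibbs_loss ev D rho - expected_disagreement ev D rho <= err D hMV.
Proof.
have K_gt0 : (0 < K)%N by apply: leq_trans hK.
have K_ge2 : (2 <= K%:R :> R)%R by rewrite (ler_nat _ 2).
have [c_bound gibbs_bound disagreement_bound] := majority_vote_bound_arith K_ge2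
  (Rintegral_majority_error_le D ev_meas hMV_meas hMV_vote)
  (Rintegral_loss_ge_half_le ev_meas hcomp)
  (Rintegral_loss_ge_half_le_sqr ev_meas hcomp)
  (Rintegral_sqr_vote_loss_le D rho ev_meas K_gt0)
  (Rintegral_vote_loss_le D ev_meas hMV_meas hMV_vote).
rewrite (errE D hMV_meas) (gibbs_lossE D rho ev_meas) (expected_disagreementE D rho ev_meas).
by rewrite -EFinM -EFinB le_min !lee_fin c_bound gibbs_bound disagreement_bound.
Qed.
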